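(* Let $M$ be a compact manifold, $\phi\in\mathrm{Diff}^2(M)$ with finitely many periodic points, $M_P$ the set of all periodic points of $\phi$, and $\ell$ the lowest common multiple of their periods. Let $A\in\mathbb{M}_{N\times N}(\mathbb{R})$ with $\rho(A)<1$, $C\in\mathbb{R}^N$, $\omega\in C^2(M,\mathbb{R})$, and $f(m)=\sum_{k=0}^\infty A^kC\,\omega(\phi^{-k}(m))$. Then $f|_{M_P}$ is injective if and only if $g:M_P\to\mathbb{R}^N$, $g=\sum_{k=0}^{\ell-1}A^kC\,(\omega\circ\phi^{-k})$, is injective. *)

From HB Require Import structures.
From mathcomp Require Import all_boot all_algebra all_classical all_reals all_analysis.
Set Implicit Arguments. Unset Strict Implicit. Unset Printing Implicit Defensive.
Import GRing.Theory Num.Theory.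
Import numFieldTopology.Exports numFieldNormedType.Exports.
From mathcomp Require Import complex.
Local Open Scope classical_set_scope.
Local Open Scope ring_scope.

Definition is_periodic {T : Type} (phi : T -> T) (m : T) : Prop :=
  exists n : nat, (0 < n)%N /\ iter n phi m = m.

Definition periodic_points {T : Type} (phi : T -> T) : set T :=
  [set m | is_periodic phi m].

(** The (minimal) period of a periodic point (0 for non-periodic points). *)
Definition period {T : Type} (phi : T -> T) (m : T) : nat :=
  match pselect (exists n : nat, `[< (0 < n)%N /\ iter n phi m = m >]) with
  | left h => ex_minn h
  | right _ => 0%N
  end.

Definition lcm_periods {T : choiceType} (phi : T -> T) : nat :=
  \big[lcmn/1%N]_(m \in periodic_points phi) period phi m.

Definition eigenvalueC {R : rcfType} {N : nat} (A : 'M[R]_N) (z : R[i]) : bool :=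
  eigenvalue (map_mx (real_complex R) A) z.

Definition cmod {R : rcfType} (z : R[i]) : R :=
  Num.sqrt (complex.Re z ^+ 2 + complex.Im z ^+ 2).

Definition spectral_radius {R : realType} {N : nat} (A : 'M[R]_N) : R :=
  sup [set cmod z | z in [set z : R[i] | eigenvalueC A z]].

(** f(m) = sum_{k>=0} A^k C omega(phi^{-k}(m)), phi^{-1} = psi. *)
Definition f_series {R : realType} {T : Type} {N : nat} (A : 'M[R]_N)
  (C : 'cV[R]_N) (omega : T -> R) (psi : T -> T) (m : T) : 'cV[R]_N :=
  lim ((fun n : nat => \sum_(k < n) (omega (iter k psi m) *: (A ^+ k *m C))
         : 'cV[R]_N) @ \oo).

Definition g_sum {R : realType} {T : Type} {N : nat} (ell : nat) (A : 'M[R]_N)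
  (C : 'cV[R]_N) (omega : T -> R) (psi : T -> T) (m : T) : 'cV[R]_N :=
  \sum_(k < ell) (omega (iter k psi m) *: (A ^+ k *m C)).

From HB Require Import structures.
From mathcomp Require Import all_boot all_algebra all_classical all_reals all_analysis.
Import GRing.Theory Num.Theory order.Order.TTheory.
Import numFieldTopology.Exports numFieldNormedType.Exports.
From mathcomp Require Import complex lra.
Import Normc.
Set Implicit Arguments. Unset Strict Implicit. Unset Printing Implicit Defensive.
Local Open Scope classical_set_scope.
Local Open Scope ring_scope.

(* Let [psi = phi^-1] and let [l] be the lcm of the periods, so [psi^l] fixes every
   periodic point.  As [rho(A) < 1], the powers [A^k] decay geometrically (Cayley-Hamilton
   over the complex numbers), hence [1 - A^l] is invertible and, grouping the series in
   blocks of length [l], [f m = (1 - A^l)^-1 g m] on periodic points.  Multiplication by an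
   invertible matrix preserves injectivity. *)

Definition geom_decay {R : numDomainType} (u : nat -> R) : Prop :=
  exists K r : R, [/\ 0 <= K, 0 <= r, r < 1 & forall k, u k <= K * r ^+ k].

Section GeometricDecay.
Variable R : realFieldType.
Implicit Types (u v : nat -> R).

Lemma geom_decay_le u v : (forall k, u k <= v k) -> geom_decay v -> geom_decay u.
Proof.
by move=> uv [K [r [K0 r0 r1 hv]]]; exists K, r; split => // k; apply: le_trans (hv k).
Qed.

Lemma geom_decay0 : geom_decay (fun=> 0 : R).
Proof. by exists 0, 0; split => // k; rewrite mul0r. Qed.

Lemma geom_decayD u v : geom_decay u -> geom_decay v -> geom_decay (fun k => u k + v k).
Proof.
move=> [K [r [K0 r0 r1 hu]]] [K' [r' [K'0 r'0 r'1 hv]]].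
exists (K + K'), (Num.max r r'); split; rewrite ?addr_ge0 ?le_max ?r0 ?gt_max ?r1 //.
have rr' : 0 <= Num.max r r' by rewrite le_max r0.
move=> k; rewrite mulrDl lerD //.
  apply: le_trans (hu k) _; rewrite ler_wpM2l //.
  by apply: lerXn2r; rewrite ?nnegrE // le_max lexx.
apply: le_trans (hv k) _; rewrite ler_wpM2l //.
by apply: lerXn2r; rewrite ?nnegrE // le_max lexx orbT.
Qed.

Lemma geom_decayZ (c : R) u : 0 <= c -> geom_decay u -> geom_decay (fun k => c * u k).
Proof.
move=> c0 [K [r [K0 r0 r1 hu]]]; exists (c * K), r; split; rewrite ?mulr_ge0 //.
by move=> k; rewrite -mulrA ler_wpM2l.
Qed.

Lemma geom_decay_sum (I : Type) (s : seq I) (F : I -> nat -> R) :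
  (forall i, geom_decay (F i)) -> geom_decay (fun k => \sum_(i <- s) F i k).
Proof.
move=> dF; elim: s => [|i s IH].
  by apply: (geom_decay_le _ geom_decay0) => k; rewrite big_nil.
by apply: (geom_decay_le _ (geom_decayD (dF i) IH)) => k; rewrite big_cons.
Qed.

Lemma geom_decay_subseq u l : (0 < l)%N ->
  geom_decay u -> geom_decay (fun j => u (l * j)%N).
Proof.
move=> l0 [K [r [K0 r0 r1 hu]]]; exists K, (r ^+ l); split; rewrite ?exprn_ge0 //.
- by rewrite exprn_ilt1 // -lt0n.
- by move=> j; rewrite -exprM hu.
Qed.

(* The majorant [K' r'^k] works for any [r'] strictly between [c] and 1 and at least [r]:
   the error term [K r^k] is absorbed because [K <= K' (r' - c)]. *)
Lemma geom_decay_rec u v (c : R) : 0 <= c -> c < 1 ->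
  (forall k, u k.+1 <= c * u k + v k) -> geom_decay v -> geom_decay u.
Proof.
move=> c0 c1 huv [K [r [K0 r0 r1 hv]]].
pose r' := Num.max r ((c + 1) / 2).
have r'r : r <= r' by rewrite le_max lexx.
have r'c : c < r' by rewrite lt_max; apply/orP; right; lra.
have r'1 : r' < 1 by rewrite gt_max r1 /=; lra.
pose K' := Num.max (Num.max 0 (u 0%N)) (K / (r' - c)).
have K'0 : 0 <= K' by rewrite !le_max lexx.
have K'u : u 0%N <= K' by rewrite !le_max lexx orbT.
have K'K : K <= K' * (r' - c) by rewrite -ler_pdivrMr ?subr_gt0 // le_max lexx orbT.
exists K', r'; split => //; first lra.
elim=> [|k IHk]; first by rewrite expr0 mulr1.
have rk0 : 0 <= r' ^+ k by rewrite exprn_ge0 //; lra.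
have h1 : c * u k <= c * (K' * r' ^+ k) by rewrite ler_wpM2l.
have h2 : K * r ^+ k <= K * r' ^+ k.
  by rewrite ler_wpM2l //; apply: lerXn2r; rewrite ?nnegrE //; lra.
have h3 : K * r' ^+ k <= K' * (r' - c) * r' ^+ k by rewrite ler_wpM2r.
apply: le_trans (huv k) _; rewrite exprS.
have := hv k; nra.
Qed.

End GeometricDecay.

Section GeometricDecayLimits.
Variable R : archiRealFieldType.
Implicit Types (u : nat -> R).

Lemma geom_decay_near u (e : R) : 0 < e -> geom_decay u -> \forall k \near \oo, u k <= e.
Proof.
move=> e0 [K [r [K0 r0 r1 hu]]].
have : (fun k => K * r ^+ k) @ \oo --> 0.
  by rewrite -(mulr0 K); apply: cvgM; [exact: cvg_cst | apply: cvg_expr; rewrite ger0_norm].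
move/cvgrPdist_le/(_ e e0); apply: filterS => k.
by rewrite sub0r normrN => /(le_trans (ler_norm _)); apply: le_trans.
Qed.

Lemma geom_decay_cst_le0 (x : R) : geom_decay (fun=> x) -> x <= 0.
Proof.
move=> dx; apply/ler_addgt0Pr => e e0; rewrite add0r.
by have [k] := filter_ex (geom_decay_near e0 dx).
Qed.

Lemma geom_decay_mx_cvg0 m n (X : nat -> 'M[R]_(m, n)) :
  (forall i j, geom_decay (fun k => `|X k i j|)) -> X @ \oo --> (0 : 'M[R]_(m, n)).
Proof.
move=> dX; apply/cvgrPdist_le => e e0.
have : \forall k \near \oo, forall ij : 'I_m * 'I_n, `|X k ij.1 ij.2| <= e.
  by apply: filter_forall => ij; exact: geom_decay_near.
apply: filterS => k Xk; rewrite sub0r normrN /Num.Def.normr /= mx_normrE.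
by apply: bigmax_le => [|ij _]; [exact: ltW | exact: Xk].
Qed.

End GeometricDecayLimits.

Lemma normr_mulmx_le (R : numDomainType) m n p (P : 'M[R]_(m, n)) (Q : 'M[R]_(n, p)) i j :
  `|(P *m Q) i j| <= \sum_l `|P i l| * `|Q l j|.
Proof.
by rewrite mxE; apply: le_trans (ler_norm_sum _ _ _) _; under eq_bigr do rewrite normrM.
Qed.

Lemma geom_decay_mulmx (R : realFieldType) m n p
    (P : nat -> 'M[R]_(m, n)) (Q : nat -> 'M[R]_(n, p)) i j :
  (forall l, geom_decay (fun k => `|P k i l| * `|Q k l j|)) ->
  geom_decay (fun k => `|(P k *m Q k) i j|).
Proof.
move=> dPQ; apply: (geom_decay_le _ (geom_decay_sum (index_enum _) dPQ)) => k.
exact: normr_mulmx_le.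
Qed.

Lemma normc_ge0 (R : rcfType) (z : R[i]) : 0 <= normc z.
Proof. exact: (@normr_ge0 _ _ (z : Rcomplex R)). Qed.

(* Peeling off the factor [B - z] turns the annihilation into the recurrence
   [B^(k+1) X = z B^k X + B^k Y] with [Y = (B - z) X], which decays by induction. *)
Lemma geom_decay_annihilated (R : rcfType) n p (B : 'M[R[i]]_n.+1) (s : seq R[i]) :
  (forall z, z \in s -> normc z < 1) ->
  forall X : 'M[R[i]]_(n.+1, p), \prod_(z <- s) (B - z%:M) *m X = 0 ->
  forall a b, geom_decay (fun k => normc ((B ^+ k *m X) a b)).
Proof.
elim/last_ind: s => [|s z IH] s1 X.
  rewrite big_nil mul1mx => -> a b.
  by apply: (geom_decay_le _ (geom_decay0 R)) => k; rewrite mulmx0 mxE normc0.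
rewrite big_rcons -mulmxA => annY a b.
have z1 : normc z < 1 by apply: s1; rewrite mem_rcons mem_head.
have dY : geom_decay (fun k => normc ((B ^+ k *m ((B - z%:M) *m X)) a b)).
  by apply: IH annY a b => w ws; apply: s1; rewrite mem_rcons in_cons ws orbT.
apply: geom_decay_rec (normc_ge0 z) z1 _ dY => k.
have -> : B ^+ k.+1 *m X = z *: (B ^+ k *m X) + B ^+ k *m ((B - z%:M) *m X).
  rewrite mulmxBl mulmxBr mul_scalar_mx -scalemxAr !mulmxA -[B ^+ k *m B]/(B ^+ k * B) -exprSr.
  by rewrite addrC subrK.
by rewrite mxE [X in normc (X + _)]mxE -normcM; apply: le_normcD.
Qed.

Lemma cmod_normc (R : rcfType) (z : R[i]) : cmod z = normc z.
Proof. by case: z. Qed.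

Lemma spectral_radius_ub (R : realType) n (A : 'M[R]_n) (z : R[i]) :
  eigenvalueC A z -> cmod z <= spectral_radius A.
Proof.
move=> Az; apply: ub_le_sup; last by exists z.
set B := map_mx (real_complex R) A.
have [rs charB] := closed_field_poly_normal (char_poly B).
exists (\big[Num.max/0]_(w <- rs) normc w) => _ [w Aw <-].
rewrite cmod_normc; apply: le_bigmax_seq => //.
rewrite (monicP (char_poly_monic B)) scale1r in charB.
by rewrite -root_prod_XsubC -charB -eigenvalue_root_char.
Qed.

Lemma geom_decay_expmx (R : realType) n (A : 'M[R]_n.+1) :
  spectral_radius A < 1 -> forall a b, geom_decay (fun k => `|(A ^+ k) a b|).
Proof.
move=> rhoA a b; set B := map_mx (real_complex R) A.
have [rs charB] := closed_field_poly_normal (char_poly B).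
rewrite (monicP (char_poly_monic B)) scale1r in charB.
have rs1 z : z \in rs -> normc z < 1.
  move=> zrs; rewrite -cmod_normc; apply: le_lt_trans rhoA.
  by apply: spectral_radius_ub; rewrite /eigenvalueC eigenvalue_root_char charB root_prod_XsubC.
have annB : \prod_(z <- rs) (B - z%:M) *m 1%:M = 0.
  rewrite mulmx1 -(Cayley_Hamilton B) charB rmorph_prod; apply: eq_bigr => z _.
  by rewrite rmorphB /= horner_mx_X horner_mx_C.
apply: (geom_decay_le _ (geom_decay_annihilated rs1 annB a b)) => k.
by rewrite mulmx1 -rmorphXn mxE /= expr0n addr0 sqrtr_sqr.
Qed.

(* Row [v] fixed by [A^l] is fixed by every [A^(l j)], whose entries decay. *)
Lemma unitmx_1_subX (R : archiRealFieldType) n (A : 'M[R]_n.+1) l : (0 < l)%N ->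
  (forall a b, geom_decay (fun k => `|(A ^+ k) a b|)) -> (1 - A ^+ l) \in unitmx.
Proof.
move=> l0 dA; rewrite unitmxE unitfE; apply/negP => /det0P [v /negP v0 vA].
apply/v0/eqP; have vAl : v *m A ^+ l = v.
  by apply/esym/eqP; rewrite -subr_eq0 -[X in X - _]mulmx1 -mulmxBr vA.
have vAlj j : v *m A ^+ (l * j) = v.
  elim: j => [|j IH]; first by rewrite muln0 expr0 mulmx1.
  by rewrite mulnS exprD -mulmxE mulmxA vAl IH.
apply/matrixP => a b; rewrite (ord1 a) mxE; apply/eqP; rewrite -normr_le0.
apply: geom_decay_cst_le0.
have dvA : geom_decay (fun k => `|(v *m A ^+ k) 0 b|).
  apply: (@geom_decay_mulmx _ _ _ _ (fun=> v) (fun k => A ^+ k)) => i.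
  exact: geom_decayZ (normr_ge0 _) (dA i b).
by apply: (geom_decay_le _ (geom_decay_subseq l0 dvA)) => j /=; rewrite vAlj.
Qed.

Section Periods.
Variables (T : Type) (phi : T -> T).

Lemma period_gt0 m : is_periodic phi m -> (0 < period phi m)%N.
Proof.
move=> [n [n0 hn]]; rewrite /period; case: pselect => [h|[]].
  by case: ex_minnP => p /asboolP [].
by exists n; apply/asboolP.
Qed.

Lemma iter_period m : is_periodic phi m -> iter (period phi m) phi m = m.
Proof.
move=> [n [n0 hn]]; rewrite /period; case: pselect => [h|[]].
  by case: ex_minnP => p /asboolP [].
by exists n; apply/asboolP.
Qed.

Lemma iter_can psi n : cancel phi psi -> cancel (iter n phi) (iter n psi).
Proof. by move=> phiK; elim: n => // n IH m; rewrite iterSr iterS phiK IH. Qed.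

End Periods.

Section LcmPeriods.
Variables (T : choiceType) (phi : T -> T).
Hypothesis finP : finite_set (periodic_points phi).

Lemma lcm_periods_gt0 : (0 < lcm_periods phi)%N.
Proof.
rewrite /lcm_periods fsbig_finite // big_seq.
apply: (big_ind (fun x => (0 < x)%N)) => // [x y|m]; first by rewrite lcmn_gt0 => ->.
by rewrite in_fset_set // inE; apply: period_gt0.
Qed.

Lemma iter_lcm_periods m : periodic_points phi m -> iter (lcm_periods phi) phi m = m.
Proof.
move=> Pm; have /dvdnP [q ->] : (period phi m %| lcm_periods phi)%N.
  by rewrite /lcm_periods (fsbigD1 m) // dvdn_lcml.
by rewrite iterM iter_fix // iter_period.
Qed.

End LcmPeriods.

Section PeriodicSeries.
Variables (R : realType) (T : Type) (n : nat) (A : 'M[R]_n.+1) (C : 'cV[R]_n.+1).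
Variables (omega : T -> R) (psi : T -> T) (l : nat).
Hypotheses (l_gt0 : (0 < l)%N) (decayA : forall a b, geom_decay (fun k => `|(A ^+ k) a b|)).

Local Notation g k := (g_sum k A C omega psi).

Let unitA : (1 - A ^+ l) \in unitmx := unitmx_1_subX l_gt0 decayA.

(* On an orbit of period dividing [l], this is the fixed point of the recursion
   [F m = omega m C + A F (psi m)] satisfied by [f]. *)
Let F m := invmx (1 - A ^+ l) *m g l m.

Lemma g_sumS k m : g k.+1 m = omega m *: C + A *m g k (psi m).
Proof.
rewrite /g_sum big_ord_recl /= expr0 mul1mx mulmx_sumr; congr (_ + _).
apply: eq_bigr => j _; rewrite -scalemxAr mulmxA -[A *m _]/(A * A ^+ j) -exprS.
by rewrite add0n -iterS iterSr.
Qed.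

Lemma g_sum_periodic m : iter l psi m = m ->
  g l m = (1 - A ^+ l) *m (omega m *: C) + A *m g l (psi m).
Proof.
move=> psim; have E : g l.+1 m = g l m + omega m *: (A ^+ l *m C).
  by rewrite /g_sum big_ord_recr /= psim.
by rewrite g_sumS in E; rewrite mulmxBl mul1mx -scalemxAr addrAC E addrK.
Qed.

Lemma F_rec m : iter l psi m = m -> F m = omega m *: C + A *m F (psi m).
Proof.
have commA : invmx (1 - A ^+ l) *m A = A *m invmx (1 - A ^+ l).
  by apply/esym/commrV/commrB; [exact: commr1 | exact/commrX/commr_refl].
move=> psim; rewrite /F g_sum_periodic // mulmxDr mulmxA mulVmx // mul1mx.
by rewrite mulmxA commA -mulmxA.
Qed.

Lemma g_sum_closed k m : iter l psi m = m -> g k m = F m - A ^+ k *m F (iter k psi m).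
Proof.
elim: k m => [|k IH] m psim; first by rewrite /g_sum big_ord0 expr0 mul1mx subrr.
have psim' : iter l psi (psi m) = psi m by rewrite -iterSr iterS psim.
rewrite (F_rec psim) g_sumS IH // mulmxBr [A *m (A ^+ k *m _)]mulmxA.
by rewrite -[A *m A ^+ k]/(A * A ^+ k) -exprS -iterSr addrA.
Qed.

(* The orbit of [m] has at most [l] points. *)
Lemma F_orbit_bounded m : iter l psi m = m ->
  exists2 W, 0 <= W & forall k a b, `|F (iter k psi m) a b| <= W.
Proof.
move=> psim; pose G (t : 'I_l * ('I_n.+1 * 'I_1)) := `|F (iter t.1 psi m) t.2.1 t.2.2|.
exists (\big[Num.max/0]_t G t) => [|k a b]; first exact: bigmax_ge_id.
have -> : iter k psi m = iter (k %% l) psi m.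
  by rewrite {1}(divn_eq k l) addnC iterD iterM (iter_fix _ psim).
exact: (le_bigmax _ G (Ordinal (ltn_pmod k l_gt0), (a, b))).
Qed.

Lemma g_sum_cvg m : iter l psi m = m -> (fun k => g k m) @ \oo --> F m.
Proof.
move=> psim; have [W W0 FW] := F_orbit_bounded psim.
have -> : (fun k => g k m) = fun k => F m - A ^+ k *m F (iter k psi m).
  by apply: funext => k; apply: g_sum_closed.
rewrite -[X in _ --> X]subr0; apply: cvgB; first exact: cvg_cst.
apply: geom_decay_mx_cvg0 => i j.
apply: (@geom_decay_mulmx _ _ _ _ (fun k => A ^+ k) (fun k => F (iter k psi m))) => p.
apply: (geom_decay_le _ (geom_decayZ W0 (decayA i p))) => k.
by rewrite mulrC ler_wpM2r.
Qed.

Lemma f_series_periodic m : iter l psi m = m ->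
  f_series A C omega psi m = invmx (1 - A ^+ l) *m g l m.
Proof. by move=> psim; apply: cvg_lim; [exact: norm_hausdorff | exact: g_sum_cvg]. Qed.
End PeriodicSeries.

Theorem mainTheorem7 (R : realType) (M : topologicalType) (phi psi : M -> M)
  (N : nat) (A : 'M[R]_N) (C : 'cV[R]_N) (omega : M -> R) :
  hausdorff_space M -> compact [set: M] ->
  continuous phi -> continuous psi -> cancel phi psi -> cancel psi phi ->
  continuous omega ->
  finite_set (periodic_points phi) ->
  spectral_radius A < 1 ->
  {in periodic_points phi &, injective (f_series A C omega psi)} <->
  {in periodic_points phi &, injective (g_sum (lcm_periods phi) A C omega psi)}.
Proof.
move=> _ _ _ _ phiK _ _ finP rhoA.
case: N A C rhoA => [|n] A C rhoA.
  by split=> inj x y Px Py _; apply: inj => //; apply/matrixP => -[].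
set l := lcm_periods phi.
have decayA := geom_decay_expmx rhoA.
have l_gt0 : (0 < l)%N := lcm_periods_gt0 finP.
have fE m : m \in periodic_points phi ->
    f_series A C omega psi m = invmx (1 - A ^+ l) *m g_sum l A C omega psi m.
  rewrite in_setE => Pm; apply: (f_series_periodic C omega l_gt0 decayA).
  by rewrite -{1}(iter_lcm_periods finP Pm) iter_can.
have unitA := unitmx_1_subX l_gt0 decayA.
split=> inj x y Px Py Exy; apply: inj => //; first by rewrite !fE // Exy.
by move: Exy; rewrite !fE // => /(congr1 (mulmx (1 - A ^+ l))); rewrite !mulKVmx.
Qed.
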